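(* Let $G^\sigma$ be an oriented graph of order $n$ having a pendant vertex. Then $sr(G^\sigma)=4$ if and only if $G^\sigma$ is one of the following: (1) a graph obtained from an oriented star $S^\sigma_{n-n_1-n_2}$ and a complete bipartite oriented graph $K^\sigma_{n_1,n_2}$ with $n_1+n_2\geq 2$, in which every cycle of length $4$ is evenly-oriented, by inserting edges, with arbitrary orientations, between the center of the star and some (possibly all) vertices of $K^\sigma_{n_1,n_2}$; (2) a graph obtained from an oriented star $S^\sigma_{n-n_1-n_2-n_3}$ and a complete tripartite oriented graph $K^\sigma_{n_1,n_2,n_3}$ with $n_1+n_2+n_3\geq 3$, in which every cycle of length $4$ is evenly-oriented, by inserting edges, with arbitrary orientations, between the center of the star and some (possibly all) vertices of $K^\sigma_{n_1,n_2,n_3}$.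
   Context: An oriented graph $G^\sigma$ is a simple graph $G$ (underlying graph) together with an orientation of each edge. Its skew-adjacency matrix $S(G^\sigma)=(s_{ij})$ has $s_{ij}=1$ if there is an arc from $v_i$ to $v_j$, $s_{ij}=-1$ if there is an arc from $v_j$ to $v_i$, and $0$ otherwise; the skew-rank $sr(G^\sigma)$ is the rank of $S(G^\sigma)$. A pendant vertex is a vertex with exactly one neighbor. $S_m$ denotes the star on $m$ vertices ($K_{1,m-1}$) and $S_m^\sigma$ an orientation of it. For an even cycle $u_1\cdots u_ku_1$, its sign is the sign of $\prod_{i=1}^k s_{u_iu_{i+1}}$ ($u_{k+1}=u_1$); the cycle is evenly-oriented if this sign is positive.
   Formalization: The underlying graph of $G^\sigma$ is also assumed connected; the parts of $K^\sigma_{n_1,n_2}$ and $K^\sigma_{n_1,n_2,n_3}$ are nonempty, and the star has at least one leaf. Each condition added here is assumed in the paper as well or is needed for the statement above to hold. *)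

From mathcomp Require Import all_boot all_order all_algebra.
Set Implicit Arguments. Unset Strict Implicit. Unset Printing Implicit Defensive.
Import Order.TTheory GRing.Theory Num.Theory.
Local Open Scope ring_scope.

(* An oriented graph on vertex set 'I_n is encoded by its skew-adjacency
   matrix S (over rat): entries in {0,1,-1}, S^T = -S (so the diagonal is 0).
   v_i v_j is an edge of the underlying graph iff S i j != 0, and
   S i j = 1 means the arc goes from v_i to v_j. *)
Definition oriented_graph n (S : 'M[rat]_n) : Prop :=
  (forall i j, S i j \in [:: 0; 1; -1]) /\ (forall i j, S j i = - S i j).

Definition adj n (S : 'M[rat]_n) : rel 'I_n := fun i j => S i j != 0.

Definition skew_rank n (S : 'M[rat]_n) : nat := \rank S.

Definition pendant n (S : 'M[rat]_n) (v : 'I_n) : Prop :=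
  #|[set u | adj S v u]| = 1%N.

Definition connected_graph n (S : 'M[rat]_n) : Prop :=
  forall i j, connect (adj S) i j.

Definition four_cycles_even n (S : 'M[rat]_n) (K : {set 'I_n}) : Prop :=
  forall u1 u2 u3 u4 : 'I_n,
    u1 \in K -> u2 \in K -> u3 \in K -> u4 \in K ->
    uniq [:: u1; u2; u3; u4] ->
    adj S u1 u2 -> adj S u2 u3 -> adj S u3 u4 -> adj S u4 u1 ->
    0 < S u1 u2 * S u2 u3 * S u3 u4 * S u4 u1.

(* The graph is obtained from an oriented star with center c and leaf set L
   (at least one leaf) and an oriented graph on the vertex set K whose
   underlying edges are given by kadj, by inserting edges (arbitrary
   orientation) between c and some (possibly all, possibly no) vertices of K. *)
Definition star_join n (S : 'M[rat]_n) (c : 'I_n) (L K : {set 'I_n})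
    (kadj : rel 'I_n) : Prop :=
  [/\ c \notin L, c \notin K, [disjoint L & K],
      c |: (L :|: K) = [set: 'I_n] & L != set0] /\
  [/\
      (forall l, l \in L -> adj S c l),
      (forall i j, i != c -> j != c -> adj S i j = kadj i j) &
      four_cycles_even S K].

Definition type1 n (S : 'M[rat]_n) : Prop :=
  exists (c : 'I_n) (L V1 V2 : {set 'I_n}),
    [/\ [disjoint V1 & V2], V1 != set0, V2 != set0,
        (2 <= #|V1| + #|V2|)%N &
        star_join S c L (V1 :|: V2)
          (fun i j => ((i \in V1) && (j \in V2)) || ((i \in V2) && (j \in V1)))].

Definition type2 n (S : 'M[rat]_n) : Prop :=
  exists (c : 'I_n) (L V1 V2 V3 : {set 'I_n}),
    [/\ [disjoint V1 & V2], [disjoint V1 & V3] & [disjoint V2 & V3]] /\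
    [/\ V1 != set0, V2 != set0, V3 != set0,
        (3 <= #|V1| + #|V2| + #|V3|)%N &
        star_join S c L (V1 :|: V2 :|: V3)
          (fun i j =>
             [|| (i \in V1) && ((j \in V2) || (j \in V3)),
                 (i \in V2) && ((j \in V1) || (j \in V3)) |
                 (i \in V3) && ((j \in V1) || (j \in V2))])].

(* Let v be the pendant vertex and c its neighbour.  If G - c has an edge ab,
   the rows v, a, b, c of S contain a nonsingular triangular 4x4 minor, so
   sr >= 4; if G - c has no edge, sr <= 2.  When sr = 4 these four rows span
   the row space, and expanding any other row in them gives the Pluecker
   relation s_ab s_ij = s_ia s_jb - s_ja s_ib for i, j <> c, i.e. all 4x4
   Pfaffians of G - c vanish; conversely, these relations write S as the sum
   of two alternating forms of rank 2, so sr <= 4.  For entries in {0, 1, -1}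
   the Pluecker relation says that the non-isolated vertices of G - c form a
   complete multipartite graph whose parts are read off from (s_xa, s_xb):
   s_xa = 0, s_xb = 0, or neither.  Finally, the Pfaffian of four vertices is
   the signed sum of their three perfect matchings; in a complete multipartite
   graph it vanishes exactly when every 4-cycle they span is evenly oriented. *)

From mathcomp Require Import all_boot all_order all_algebra.
From mathcomp Require Import ring lra.
Set Implicit Arguments. Unset Strict Implicit. Unset Printing Implicit Defensive.
Import Order.TTheory GRing.Theory Num.Theory.
Local Open Scope ring_scope.

Section RankLemmas.
Variable F : fieldType.

Lemma mxrank_mxsub m n m' n' (f : 'I_m' -> 'I_m) (g : 'I_n' -> 'I_n)
    (A : 'M[F]_(m, n)) :
  (\rank (mxsub f g A) <= \rank A)%N.
Proof.
have -> : mxsub f g A = rowsub f A *m colsub g 1%:M by rewrite -mxsub_mul mulmx1.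
apply: leq_trans (mxrankM_maxl _ _) _; exact: mxrankS (rowsub_sub _ _).
Qed.

Definition wedge n (f g : 'I_n -> F) : 'M[F]_n :=
  \matrix_(i, j) (f i * g j - g i * f j).

Lemma rank_wedge n (f g : 'I_n -> F) : (\rank (wedge f g) <= 2)%N.
Proof.
have -> : wedge f g = \col_i f i *m \row_j g j - \col_i g i *m \row_j f j.
  by apply/matrixP => i j; rewrite !mxE !big_ord1 !mxE.
apply: leq_trans (mxrank_add _ _) _; rewrite mxrank_opp.
by rewrite -[2%N]/(1 + 1)%N; apply: leq_add; apply: leq_trans (mxrankM_maxl _ _) (rank_leq_col _).
Qed.

Lemma row_combination m n p (A : 'M[F]_(m, n)) (f : 'I_p -> 'I_m) i :
  (\rank A <= \rank (rowsub f A))%N -> exists d : 'rV_p, row i A = d *m rowsub f A.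
Proof.
move=> leAf; have sfA := rowsub_sub f A.
have sAf : (A <= rowsub f A)%MS by rewrite -(mxrank_leqif_sup sfA).2 eqn_leq leAf mxrankS.
exact/submxP/(submx_trans (row_sub i A) sAf).
Qed.

End RankLemmas.

Section Alternating.
Variables (F : fieldType) (n : nat) (S : 'M[F]_n).
Hypotheses (S_skew : forall i j, S j i = - S i j) (S_diag : forall i, S i i = 0).

Definition pf4 i j k l := S i j * S k l - S i k * S j l + S i l * S j k.

Lemma pf4_pivot a b i j :
  pf4 a b i j = S a b * S i j - (S i a * S j b - S j a * S i b).
Proof. rewrite /pf4 (S_skew i a) (S_skew j b) (S_skew j a) (S_skew i b); ring. Qed.

Definition delete_vertex c : 'M[F]_n :=
  \matrix_(i, j) (if (i != c) && (j != c) then S i j else 0).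

Lemma rank_delete_vertex c : (\rank S <= 2 + \rank (delete_vertex c))%N.
Proof.
have -> : S = wedge (fun i => (i == c)%:R) (S c) + delete_vertex c.
  apply/matrixP => i j; rewrite !mxE.
  have [->|ic] := eqVneq i c; have [->|jc] := eqVneq j c => /=;
    by rewrite ?S_diag ?(S_skew i c); ring.
by apply: leq_trans (mxrank_add _ _) _; rewrite leq_add2r rank_wedge.
Qed.

Section Pivot.
Variables (c a b : 'I_n).
Hypothesis Sab : S a b != 0.
Hypothesis pivot : forall i j, i != c -> j != c -> pf4 a b i j = 0.

Lemma pf4_eq0_of_pivot i j k l : i != c -> j != c -> k != c -> l != c ->
  pf4 i j k l = 0.
Proof.
have P x y : x != c -> y != c -> S a b * S x y = S x a * S y b - S y a * S x b.
  by move=> xc yc; apply/eqP; rewrite -subr_eq0 -pf4_pivot pivot.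
move=> ic jc kc lc; have /eqP : S a b * S a b * pf4 i j k l = 0.
  rewrite /pf4; transitivity ((S a b * S i j) * (S a b * S k l)
      - (S a b * S i k) * (S a b * S j l) + (S a b * S i l) * (S a b * S j k)).
    by ring.
  by rewrite !P //; ring.
by rewrite !mulf_eq0 (negPf Sab) => /eqP.
Qed.

Lemma rank_le4_of_pivot : (\rank S <= 4)%N.
Proof.
apply: leq_trans (rank_delete_vertex c) _.
pose f i := if i == c then 0 else S i a / S a b.
pose g i := if i == c then 0 else S i b.
have -> : delete_vertex c = wedge f g.
  apply/matrixP => i j; rewrite !mxE /f /g.
  have [_|ic] := eqVneq i c; have [_|jc] := eqVneq j c => /=; try ring.
  apply: (mulfI Sab); move/eqP: (pivot ic jc); rewrite pf4_pivot subr_eq0 => /eqP ->.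
  by field.
by rewrite -[4%N]/(2 + 2)%N leq_add2l rank_wedge.
Qed.

End Pivot.

Section Pendant.
Variables (v c : 'I_n).
Hypotheses (Sv0 : forall j, j != c -> S v j = 0) (Svc : S v c != 0).

Section Edge.
Variables (a b : 'I_n).
Hypotheses (ac : a != c) (bc : b != c) (Sab : S a b != 0).

Lemma rank_rows4 : \rank (rowsub (tnth [tuple v; a; b; c]) S) = 4%N.
Proof.
apply/anti_leq; rewrite rank_leq_row /=.
set M := mxsub (tnth [tuple v; a; b; c]) (tnth [tuple c; b; a; v]) S.
have trigM : is_trig_mx M.
  apply/is_trig_mxP => i j; rewrite !mxE.
  case: i => [[|[|[|[|?]]]] ?] //; case: j => [[|[|[|[|?]]]] ?] //= _;
    by rewrite /tnth /= ?S_diag ?Sv0 // S_skew Sv0 ?oppr0.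
have unitM : M \in unitmx.
  rewrite unitmxE det_trig // !big_ord_recr big_ord0 /= !mxE /tnth /= unitfE.
  by rewrite mul1r !mulf_neq0 // ?[S b a]S_skew ?[S c v]S_skew ?oppr_eq0.
apply: leq_trans (eq_leq (esym (mxrank_unit unitM))) _.
rewrite /M mxsubcr; exact: mxrank_mxsub.
Qed.

Lemma rank_ge4 : (4 <= \rank S)%N.
Proof. by rewrite -rank_rows4 mxrankS // rowsub_sub. Qed.

Lemma pivot_of_rank_le4 : (\rank S <= 4)%N ->
  forall i j, i != c -> j != c -> pf4 a b i j = 0.
Proof.
move=> rankS i j ic jc; rewrite -rank_rows4 in rankS.
have [d /matrixP rowi] := row_combination i rankS.
have Si k : S i k = d 0 0 * S v k + d 0 1 * S a k + d 0 2 * S b k + d 0 3 * S c k.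
  move: (rowi 0 k); rewrite !mxE => ->.
  rewrite !big_ord_recr big_ord0 /= !mxE /tnth /= add0r.
  by congr (_ + _ + _ + _); congr (_ * _); congr (d _ _); apply: val_inj.
(* Column v vanishes outside row c, so row c does not occur in the expansion. *)
have d3 : d 0 3 = 0.
  move: (Si v); rewrite S_diag (S_skew v a) (S_skew v b) (S_skew v i) !Sv0 //.
  rewrite !oppr0 !mulr0 !add0r => /esym/eqP; rewrite mulf_eq0 S_skew oppr_eq0.
  by rewrite (negPf Svc) orbF => /eqP.
have Sia := Si a; have Sib := Si b; have Sij := Si j.
rewrite d3 !Sv0 // !S_diag in Sia Sib Sij.
rewrite pf4_pivot Sia Sib Sij (S_skew j a) (S_skew j b) (S_skew b a); ring.
Qed.

End Edge.
End Pendant.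
End Alternating.

Definition trit (x : rat) := x \in [:: 0; 1; -1].

Lemma tritP x : trit x -> [\/ x = 0, x = 1 | x = -1].
Proof. by rewrite /trit !inE => /or3P[]/eqP->; [constructor 1|constructor 2|constructor 3]. Qed.

Ltac trit_cases h := case/tritP: h => ->.

Lemma tritN x : trit x -> trit (- x).
Proof. by move=> hx; trit_cases hx; rewrite ?opprK. Qed.

Lemma tritM x y : trit x -> trit y -> trit (x * y).
Proof. by move=> hx hy; trit_cases hx; trit_cases hy. Qed.

Lemma trit_sq x : trit x -> x != 0 -> x * x = 1.
Proof. by move=> hx; trit_cases hx => // _; rewrite ?mulrNN mulr1. Qed.

Lemma trit_add3_eq0 x y z : trit x -> trit y -> trit z ->
  x * y <= 0 -> y * z <= 0 -> z * x <= 0 ->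
  (x == 0) && (y == 0) ==> (z == 0) -> (y == 0) && (z == 0) ==> (x == 0) ->
  (z == 0) && (x == 0) ==> (y == 0) -> x + y + z = 0.
Proof. by move=> hx hy hz; trit_cases hx; trit_cases hy; trit_cases hz. Qed.

Lemma trit_pos_of_eq1D p x : trit p -> trit x -> p != 0 -> p = 1 + x -> 0 < p.
Proof. by move=> hp hx; trit_cases hp; trit_cases hx. Qed.

Definition trit_class (x y : rat) : nat :=
  if x == 0 then 0 else if y == 0 then 1 else 2.

Lemma trit_class_neq x1 y1 x2 y2 :
  trit x1 -> trit y1 -> trit x2 -> trit y2 -> trit (x1 * y2 - x2 * y1) ->
  (x1 != 0) || (y1 != 0) -> (x2 != 0) || (y2 != 0) ->
  (x1 * y2 - x2 * y1 != 0) = (trit_class x1 y1 != trit_class x2 y2).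
Proof.
by move=> h1 h2 h3 h4; trit_cases h1; trit_cases h2; trit_cases h3; trit_cases h4.
Qed.

Lemma perfect_matchings_same_part (T : eqType) (p1 p2 p3 p4 : T) :
  [/\ ((p1 == p2) || (p3 == p4)) && ((p1 == p3) || (p2 == p4)) ==> (p1 == p4) || (p2 == p3),
      ((p1 == p3) || (p2 == p4)) && ((p1 == p4) || (p2 == p3)) ==> (p1 == p2) || (p3 == p4) &
      ((p1 == p4) || (p2 == p3)) && ((p1 == p2) || (p3 == p4)) ==> (p1 == p3) || (p2 == p4)].
Proof.
by split; apply/implyP => /andP[/orP[]/eqP-> /orP[]/eqP->]; rewrite ?eqxx ?orbT // eq_sym ?eqxx ?orbT.
Qed.

Definition kadj3 n (V1 V2 V3 : {set 'I_n}) : rel 'I_n := fun i j =>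
  [|| (i \in V1) && ((j \in V2) || (j \in V3)),
      (i \in V2) && ((j \in V1) || (j \in V3)) |
      (i \in V3) && ((j \in V1) || (j \in V2))].

Definition part_index n (V1 V2 : {set 'I_n}) (x : 'I_n) : nat :=
  if x \in V1 then 0 else if x \in V2 then 1 else 2.

Lemma kadj3_part_index n (V1 V2 V3 : {set 'I_n}) i j :
  [disjoint V1 & V2] -> [disjoint V1 & V3] -> [disjoint V2 & V3] ->
  i \in V1 :|: V2 :|: V3 -> j \in V1 :|: V2 :|: V3 ->
  kadj3 V1 V2 V3 i j = (part_index V1 V2 i != part_index V1 V2 j).
Proof.
move=> d12 d13 d23.
have memV x : x \in V1 :|: V2 :|: V3 ->
    [\/ [/\ x \in V1, x \in V2 = false & x \in V3 = false],
        [/\ x \in V1 = false, x \in V2 & x \in V3 = false] |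
        [/\ x \in V1 = false, x \in V2 = false & x \in V3]].
  rewrite !inE -orbA => /or3P[] xV.
  - by constructor 1; rewrite xV (disjointFr d12 xV) (disjointFr d13 xV).
  - by constructor 2; rewrite xV (disjointFl d12 xV) (disjointFr d23 xV).
  - by constructor 3; rewrite xV (disjointFl d13 xV) (disjointFl d23 xV).
rewrite /kadj3 /part_index => /memV[][-> -> ->] /memV[][-> -> ->] //.
Qed.

Lemma kadj3_classes n (K : {set 'I_n}) (p : 'I_n -> nat) i j :
  (forall x, p x < 3)%N ->
  kadj3 [set x in K | p x == 0%N] [set x in K | p x == 1%N] [set x in K | p x == 2%N] i j
    = [&& i \in K, j \in K & p i != p j].
Proof.
move=> p3; rewrite /kadj3 !inE.
case: (i \in K) (j \in K) => [] [] /=; rewrite ?andbF //; move: (p3 i) (p3 j).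
by case: (p i) => [|[|[|]]] //; case: (p j) => [|[|[|]]].
Qed.

(* Cases (1) and (2) at once: [V3 = set0] is the bipartite case. *)
Definition star_join3 n (S : 'M[rat]_n) c (L V1 V2 V3 : {set 'I_n}) : Prop :=
  [/\ [disjoint V1 & V2], [disjoint V1 & V3], [disjoint V2 & V3],
      V1 != set0 & V2 != set0] /\
  star_join S c L (V1 :|: V2 :|: V3) (kadj3 V1 V2 V3).

Section OrientedGraph.
Variables (n : nat) (S : 'M[rat]_n).
Hypothesis og : oriented_graph S.

Lemma og_skew i j : S j i = - S i j.
Proof. exact: og.2. Qed.

Lemma og_diag i : S i i = 0.
Proof. by have := og_skew i i; lra. Qed.

Lemma og_trit i j : trit (S i j).
Proof. exact: og.1. Qed.

Lemma walk4_prod_ge0 (K : {set 'I_n}) u1 u2 u3 u4 : four_cycles_even S K ->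
  u1 \in K -> u2 \in K -> u3 \in K -> u4 \in K ->
  0 <= S u1 u2 * S u2 u3 * S u3 u4 * S u4 u1.
Proof.
move=> even k1 k2 k3 k4; have [uq|] := boolP (uniq [:: u1; u2; u3; u4]).
  have [|] := boolP [|| S u1 u2 == 0, S u2 u3 == 0, S u3 u4 == 0 | S u4 u1 == 0].
    by case/or4P=> /eqP->; rewrite ?(mulr0, mul0r).
  by rewrite !negb_or => /and4P[*]; apply/ltW/even.
(* A closed walk through a repeated vertex has a square sign product. *)
rewrite /= !inE !negb_or andbT !negb_and !negbK.
case/orP=> [/orP[|/orP[]]|/orP[/orP[]|]] /eqP <-; rewrite ?og_diag ?(mulr0, mul0r) //.
- by rewrite (og_skew u1 u2) (og_skew u1 u4); nra.
- by rewrite (og_skew u1 u2) (og_skew u2 u3); nra.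
Qed.

Lemma pf4_eq0_of_multipartite (K : {set 'I_n}) (T : eqType) (p : 'I_n -> T)
    u1 u2 u3 u4 :
  four_cycles_even S K ->
  (forall x y, x \in K -> y \in K -> (S x y == 0) = (p x == p y)) ->
  u1 \in K -> u2 \in K -> u3 \in K -> u4 \in K -> pf4 S u1 u2 u3 u4 = 0.
Proof.
(* The three terms of the Pfaffian are the signed perfect matchings of u1..u4.
   Two nonzero terms form a 4-cycle, so evenness gives them opposite signs,
   and a single nonzero term would need two same-part pairs in the other
   two matchings, which forces one in the third. *)
move=> even part k1 k2 k3 k4.
have walk := walk4_prod_ge0 even.
have [m123 m234 m341] := perfect_matchings_same_part (p u1) (p u2) (p u3) (p u4).
rewrite /pf4 -[_ - _]/(_ + - _).
apply: trit_add3_eq0; rewrite ?tritN ?tritM ?og_trit ?oppr_eq0 ?mulf_eq0 ?part //.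
- by have := walk _ _ _ _ k1 k2 k4 k3; rewrite (og_skew u3 u4) (og_skew u1 u3); nra.
- by have := walk _ _ _ _ k1 k3 k2 k4; rewrite (og_skew u2 u3) (og_skew u1 u4); nra.
- by have := walk _ _ _ _ k1 k2 k3 k4; rewrite (og_skew u1 u4); nra.
Qed.

Lemma even_cycle_of_pf4_eq0 u1 u2 u3 u4 : pf4 S u1 u2 u3 u4 = 0 ->
  adj S u1 u2 -> adj S u2 u3 -> adj S u3 u4 -> adj S u4 u1 ->
  0 < S u1 u2 * S u2 u3 * S u3 u4 * S u4 u1.
Proof.
rewrite /adj => pf0 a12 a23 a34 a41.
have a14 : S u1 u4 != 0 by rewrite -oppr_eq0 -og_skew.
apply: (@trit_pos_of_eq1D _ (S u1 u3 * S u2 u4 * S u2 u3 * S u4 u1));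
  rewrite ?tritM ?og_trit ?mulf_neq0 //.
rewrite -[1]mulr1 -{1}(trit_sq (og_trit u1 u4) a14) -(trit_sq (og_trit u2 u3) a23).
apply/eqP; rewrite -subr_eq0; apply/eqP.
transitivity (- S u1 u4 * S u2 u3 * pf4 S u1 u2 u3 u4); last by rewrite pf0 mulr0.
by rewrite /pf4 (og_skew u1 u4); ring.
Qed.

Section Forward.
Variables (v c a b : 'I_n).
Hypotheses (Sv0 : forall j, j != c -> S v j = 0) (Svc : S v c != 0).
Hypotheses (ac : a != c) (bc : b != c).
Hypotheses (Sab : S a b != 0) (pivot : forall i j, i != c -> j != c -> pf4 S a b i j = 0).

(* The non-isolated vertices of G - c (see [S_offcore]). *)
Definition core := [set x | (x != c) && ((S x a != 0) || (S x b != 0))].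
Definition class x := trit_class (S x a) (S x b).
Definition part k := [set x in core | class x == k].
Definition leaves := [set x | (x != c) && (x \notin core)].

Lemma class_lt3 x : (class x < 3)%N.
Proof. by rewrite /class /trit_class; case: ifP => //; case: ifP. Qed.

Lemma plucker i j : i != c -> j != c ->
  S a b * S i j = S i a * S j b - S j a * S i b.
Proof. by move=> ic jc; apply/eqP; rewrite -subr_eq0 -(pf4_pivot og_skew) pivot. Qed.

Lemma S_offcore x j : x != c -> x \notin core -> j != c -> S x j = 0.
Proof.
move=> xc; rewrite inE xc negb_or !negbK => /andP[/eqP xa /eqP xb] jc.
by apply: (mulfI Sab); rewrite plucker // xa xb !(mulr0, mul0r) subrr.
Qed.

Lemma core_neq x : x \in core -> x != c.
Proof. by rewrite inE => /andP[]. Qed.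

Lemma adj_offc i j : i != c -> j != c -> adj S i j = kadj3 (part 0) (part 1) (part 2) i j.
Proof.
move=> ic jc; rewrite kadj3_classes; last exact: class_lt3.
have [iK|iK] := boolP (i \in core); last by rewrite /adj S_offcore ?eqxx.
have [jK|jK] := boolP (j \in core); last by rewrite /adj og_skew S_offcore ?oppr0 ?eqxx ?andbF.
have core_nz x : x \in core -> (S x a != 0) || (S x b != 0) by rewrite inE => /andP[].
have tij : trit (S i a * S j b - S j a * S i b) by rewrite -plucker // tritM ?og_trit.
by rewrite /adj /class -trit_class_neq ?og_trit ?core_nz // -plucker // mulf_eq0 (negPf Sab).
Qed.

Lemma core_even : four_cycles_even S core.
Proof.
move=> u1 u2 u3 u4 k1 k2 k3 k4 _; apply: even_cycle_of_pf4_eq0.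
by apply: (pf4_eq0_of_pivot og_skew Sab pivot); apply: core_neq.
Qed.

Lemma parts_cover : part 0 :|: part 1 :|: part 2 = core.
Proof.
apply/setP => x; rewrite !inE; move: (class_lt3 x).
by case: (class x) => [|[|[|]]] //= _; rewrite ?andbT ?andbF ?orbF.
Qed.

Lemma disjoint_part k l : k != l -> [disjoint part k & part l].
Proof.
move=> kl; apply/pred0P => x; rewrite /= !inE; apply/negbTE.
by apply: contra kl => /andP[/andP[_ /eqP <-] /andP[_ /eqP <-]].
Qed.

Lemma star_edge (conn : connected_graph S) l : l \in leaves -> adj S c l.
Proof.
rewrite inE => /andP[lc lK]; case/connectP: (conn l c) => -[/= _ lc'|z p /= /andP[lz _] _].
  by rewrite lc' eqxx in lc.
have zc : z == c by apply: contraLR lz => zc; rewrite /adj S_offcore ?eqxx.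
by rewrite /adj og_skew oppr_eq0 -(eqP zc).
Qed.

Lemma star_join3_core : connected_graph S -> star_join3 S c leaves (part 0) (part 1) (part 2).
Proof.
move=> conn; split.
  split; rewrite ?disjoint_part //; apply/set0Pn.
  - by exists a; rewrite !inE ac Sab orbT /class /trit_class og_diag eqxx.
  - exists b; rewrite !inE bc og_skew oppr_eq0 Sab /class /trit_class og_diag eqxx.
    by rewrite og_skew oppr_eq0 (negPf Sab).
rewrite parts_cover; split; last by split; [exact: star_edge | exact: adj_offc | exact: core_even].
have vc : v != c by apply: contraNneq Svc => ->; rewrite og_diag.
split.
- by rewrite inE eqxx.
- by rewrite inE eqxx.
- by apply/pred0P => x; rewrite /= [x \in leaves]inE -andbA andNb andbF.
- apply/setP => x; rewrite in_setT in_setU1 in_setU [x \in leaves]inE.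
  by case: eqP => //= _; case: (x \in core).
- by apply/set0Pn; exists v; rewrite !inE vc /= !Sv0 ?eqxx.
Qed.

End Forward.

Lemma star_join3_of_rank4 v : connected_graph S -> pendant S v -> \rank S = 4%N ->
  exists c L V1 V2 V3, star_join3 S c L V1 V2 V3.
Proof.
move=> conn pend rankS.
have [c Nv] : exists c, [set u | adj S v u] = [set c] by apply/cards1P/eqP.
have Sv0 j : j != c -> S v j = 0.
  by move=> jc; apply/eqP; apply: contraNT jc => vj; rewrite -in_set1 -Nv inE.
have Svc : S v c != 0 by have := set11 c; rewrite -Nv inE.
have [/existsP[a /existsP[b /and3P[ac bc Sab]]]|noedge] :=
  boolP [exists a, exists b, [&& a != c, b != c & S a b != 0]]; last first.
  have Gc0 : delete_vertex S c = 0.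
    apply/matrixP => i j; rewrite !mxE; case: ifP => // /andP[ic jc].
    apply/eqP; apply: contraNT noedge => Sij.
    by apply/existsP; exists i; apply/existsP; exists j; rewrite ic jc.
  by have := rank_delete_vertex og_skew og_diag c; rewrite Gc0 mxrank0 rankS.
have pivot := pivot_of_rank_le4 og_skew og_diag Sv0 Svc ac bc Sab (eq_leq rankS).
exists c, (leaves c a b), (part c a b 0), (part c a b 1), (part c a b 2).
exact: (star_join3_core Sv0 Svc ac bc Sab pivot conn).
Qed.

Lemma S_off_multipartite c (V1 V2 V3 : {set 'I_n}) :
  (forall i j, i != c -> j != c -> adj S i j = kadj3 V1 V2 V3 i j) ->
  forall x y, x != c -> y != c -> x \notin V1 :|: V2 :|: V3 -> S x y = 0.
Proof.
move=> adjK x y xc yc; rewrite !inE -orbA !negb_or => /and3P[/negPf x1 /negPf x2 /negPf x3].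
by apply/eqP/negbNE; rewrite -/(adj S x y) adjK // /kadj3 x1 x2 x3.
Qed.

Lemma pivot_of_multipartite c (V1 V2 V3 : {set 'I_n}) a b :
  [disjoint V1 & V2] -> [disjoint V1 & V3] -> [disjoint V2 & V3] ->
  (forall i j, i != c -> j != c -> adj S i j = kadj3 V1 V2 V3 i j) ->
  four_cycles_even S (V1 :|: V2 :|: V3) ->
  a \in V1 :|: V2 :|: V3 -> b \in V1 :|: V2 :|: V3 -> c \notin V1 :|: V2 :|: V3 ->
  forall i j, i != c -> j != c -> pf4 S a b i j = 0.
Proof.
set K := V1 :|: V2 :|: V3 => d12 d13 d23 adjK even aK bK cK.
have Kc x : x \in K -> x != c by apply: contraTneq => ->.
have offK := S_off_multipartite adjK.
move=> i j ic jc.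
have [ac bc] := (Kc a aK, Kc b bK).
have pivotE := pf4_pivot og_skew a b i j.
have [iK|iK] := boolP (i \in K); last first.
  by rewrite pivotE !(offK i) // !(mulr0, mul0r) subrr.
have [jK|jK] := boolP (j \in K); last first.
  by rewrite pivotE (og_skew j i) !(offK j) // !(oppr0, mulr0, mul0r) subrr.
apply: (pf4_eq0_of_multipartite (p := part_index V1 V2) even) => // x y xK yK.
by apply: negb_inj; rewrite -(kadj3_part_index d12 d13 d23 xK yK) -adjK ?Kc.
Qed.

Lemma rank4_of_star_join3 c L V1 V2 V3 : star_join3 S c L V1 V2 V3 -> \rank S = 4%N.
Proof.
case=> -[d12 d13 d23 /set0Pn[a aV1] /set0Pn[b bV2]].
case=> -[cL cK dLK _ /set0Pn[v vL]] [edges adjK even].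
have Kc x : x \in V1 :|: V2 :|: V3 -> x != c by apply: contraTneq => ->.
have aK : a \in V1 :|: V2 :|: V3 by rewrite !inE aV1.
have bK : b \in V1 :|: V2 :|: V3 by rewrite !inE bV2 orbT.
have [ac bc] := (Kc a aK, Kc b bK).
have vc : v != c by apply: contraTneq vL => ->.
have Sv0 j : j != c -> S v j = 0.
  by move=> jc; apply: (S_off_multipartite adjK) => //; rewrite (disjointFr dLK vL).
have Svc : S v c != 0 by rewrite og_skew oppr_eq0; exact: edges.
have Sab : S a b != 0 by rewrite -/(adj S a b) adjK // /kadj3 aV1 bV2.
have pivot := pivot_of_multipartite d12 d13 d23 adjK even aK bK cK.
apply/anti_leq; rewrite (rank_le4_of_pivot og_skew og_diag Sab pivot).
exact: (rank_ge4 og_skew og_diag Sv0 Svc ac bc Sab).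
Qed.

End OrientedGraph.

Lemma star_join_kadj n (S : 'M[rat]_n) c L K (kadj kadj' : rel 'I_n) :
  kadj =2 kadj' -> star_join S c L K kadj -> star_join S c L K kadj'.
Proof. by move=> e [sK [edges adjK even]]; split=> //; split=> // i j ic jc; rewrite adjK. Qed.

Lemma types_star_join3 n (S : 'M[rat]_n) :
  type1 S \/ type2 S <-> exists c L V1 V2 V3, star_join3 S c L V1 V2 V3.
Proof.
have disj0 (V : {set 'I_n}) : [disjoint V & set0] by apply/pred0P => x; rewrite /= in_set0 andbF.
have kadj3_set0 (V1 V2 : {set 'I_n}) i j :
    kadj3 V1 V2 set0 i j = ((i \in V1) && (j \in V2)) || ((i \in V2) && (j \in V1)).
  by rewrite /kadj3 !in_set0 /= !orbF.
split.
- case=> [[c [L [V1 [V2 [d12 V1n V2n _ sj]]]]]|[c [L [V1 [V2 [V3 [[d12 d13 d23] [V1n V2n _ _ sj]]]]]]]].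
    exists c, L, V1, V2, set0; split; first by split; rewrite ?disj0.
    by rewrite setU0; apply: star_join_kadj sj => i j; rewrite kadj3_set0.
  by exists c, L, V1, V2, V3.
case=> c [L [V1 [V2 [V3 [[d12 d13 d23 V1n V2n] sj]]]]].
have [V30|V3n] := eqVneq V3 set0.
  left; exists c, L, V1, V2; split => //.
    by rewrite -[2%N]/(1 + 1)%N; apply: leq_add; rewrite card_gt0.
  by move: sj; rewrite V30 setU0; apply: star_join_kadj => i j; rewrite kadj3_set0.
right; exists c, L, V1, V2, V3; split => //; split => //.
by rewrite -[3%N]/(1 + 1 + 1)%N; apply: leq_add; [apply: leq_add|]; rewrite card_gt0.
Qed.

Theorem theorem3p4 (n : nat) (S : 'M[rat]_n) :
  oriented_graph S -> connected_graph S -> (exists v, pendant S v) ->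
  (skew_rank S = 4%N <-> (type1 S \/ type2 S)).
Proof.
move=> og conn [v pend]; rewrite types_star_join3; split.
- exact: (star_join3_of_rank4 og conn pend).
- by case=> c [L [V1 [V2 [V3 /(rank4_of_star_join3 og)]]]].
Qed.
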